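(* Let $\delta\ge1$ be an integer. Under the AMC policy, for every characteristic function $v\in V_\delta$ and every arrival order $\pi$, the coalition structure $C_g$ formed by greedy players satisfies $|S|\le\delta$ for every $S\in C_g$.
   Context: Players: a finite set $N=\{a_1,\dots,a_n\}$. A characteristic function is $v:2^N\to\mathbb{R}_{\ge 0}$ with $v(\emptyset)=0$. There are fixed constants $0<\mathsf{min}\le\mathsf{max}$ and $v$ is monotone and bounded: $\mathsf{min}\le v(S)\le v(T)\le\mathsf{max}$ for all nonempty $S\subseteq T\subseteq N$. $V_\delta$ is the set of such $v$ with $\delta\cdot\mathsf{min}\le\mathsf{max}<(\delta+1)\cdot\mathsf{min}$. Online process: an arrival order is a permutation $\pi=(\pi_1,\dots,\pi_n)$ of $N$; player $\pi_t$ arrives at time $t$; $\pi_{\prec t}$ is the set of players arriving before time $t$ and $\pi^{-1}(i)$ the arrival time of $i$. For $S\subseteq N$, $\pi_{|S}$ denotes the players of $S$ in the relative order of $\pi$. Let $C^{t-1}$ be the coalition structure of players arrived before time $t$ ($C^0=\emptyset$). At time $t$, player $\pi_t$ either joins an existing coalition $S\in C^{t-1}$ or forms $\{\pi_t\}$ (choice $S=\emptyset$); decisions are never revised. AMC policy: for a coalition $S$ and $i\in S$, $\varphi_i(S,\pi_{|S})=v((\pi_{\prec\pi^{-1}(i)}\cap S)\cup\{i\})-v(\pi_{\prec\pi^{-1}(i)}\cap S)$. Greedy players: $\pi_t$ chooses $S\in C^{t-1}\cup\{\emptyset\}$ maximizing $\varphi_{\pi_t}(S\cup\{\pi_t\},\pi_{|S\cup\{\pi_t\}})$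 (predetermined tie-breaking); $C_g$ is the final structure after all $n$ arrivals. *)

From HB Require Import structures.
From mathcomp Require Import all_boot all_order all_algebra.
Set Implicit Arguments. Unset Strict Implicit. Unset Printing Implicit Defensive.
Import Order.TTheory GRing.Theory Num.Theory.
Local Open Scope ring_scope.

Definition in_V (R : realFieldType) (T : finType) (mn mx : R) (delta : nat)
    (v : {set T} -> R) : Prop :=
  [/\ v set0 = 0, 0 < mn, mn <= mx,
      (forall S U : {set T}, S != set0 -> S \subset U ->
          mn <= v S /\ v S <= v U /\ v U <= mx)
    & delta%:R * mn <= mx /\ mx < delta.+1%:R * mn].

Definition arrived_before (T : finType) (s : seq T) (i : T) : {set T} :=
  [set x in take (index i s) s].

Definition amc (R : realFieldType) (T : finType) (v : {set T} -> R)
    (s : seq T) (S : {set T}) (i : T) : R :=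
  v ((arrived_before s i :&: S) :|: [set i]) - v (arrived_before s i :&: S).

(* greedy_run v s C : C is a coalition structure that can result from greedy
   players arriving in order s (s a prefix of the arrival order), where every
   arriving player picks an option (existing coalition, or a new singleton)
   maximising its AMC share; ties may be broken in any way, so every
   predetermined tie-breaking rule yields such a run. *)
Inductive greedy_run (R : realFieldType) (T : finType) (v : {set T} -> R)
  : seq T -> {set {set T}} -> Prop :=
| greedy_nil : greedy_run v [::] set0
| greedy_new (s : seq T) (C : {set {set T}}) (p : T) :
    greedy_run v s C ->
    (forall S', S' \in C ->
        amc v (rcons s p) (S' :|: [set p]) p <= amc v (rcons s p) [set p] p) ->
    greedy_run v (rcons s p) ([set p] |: C)
| greedy_join (s : seq T) (C : {set {set T}}) (p : T) (S : {set T}) :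
    greedy_run v s C ->
    S \in C ->
    amc v (rcons s p) [set p] p <= amc v (rcons s p) (S :|: [set p]) p ->
    (forall S', S' \in C ->
        amc v (rcons s p) (S' :|: [set p]) p <= amc v (rcons s p) (S :|: [set p]) p) ->
    greedy_run v (rcons s p) ((S :|: [set p]) |: (C :\ S)).

From HB Require Import structures.
From mathcomp Require Import all_boot all_order all_algebra.
Set Implicit Arguments. Unset Strict Implicit. Unset Printing Implicit Defensive.
Import Order.TTheory GRing.Theory Num.Theory.
Local Open Scope ring_scope.

(* Every coalition S built by greedy players satisfies |S| * min <= v(S).
   A player p joining S receives v(S ∪ {p}) - v(S), and being greedy it
   receives at least its stand-alone share v({p}) >= min, so each arrival
   raises the value of its coalition by at least min.  As v(S) <= max
   < (delta + 1) * min, no coalition has more than delta members. *)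

Lemma set1_neq0 (T : finType) (x : T) : [set x] != set0.
Proof. by apply/set0Pn; exists x; rewrite set11. Qed.

Lemma set_in_rcons (T : finType) (s : seq T) (p : T) :
  [set x in rcons s p] = p |: [set x in s].
Proof. by apply/setP=> x; rewrite !inE mem_rcons inE. Qed.

Lemma arrived_before_rcons (T : finType) (s : seq T) (p : T) :
  p \notin s -> arrived_before (rcons s p) p = [set x in s].
Proof.
move=> p_notin_s; rewrite /arrived_before -cats1 index_cat (negbTE p_notin_s).
by rewrite /= eqxx addn0 take_size_cat.
Qed.

Lemma amc_rcons (R : realFieldType) (T : finType) (v : {set T} -> R)
    (s : seq T) (p : T) (S : {set T}) :
  p \notin s -> S \subset [set x in s] ->
  amc v (rcons s p) (S :|: [set p]) p = v (S :|: [set p]) - v S.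
Proof.
move=> p_notin_s S_sub; rewrite /amc arrived_before_rcons // setIUr.
have /eqP -> : [set x in s] :&: [set p] == set0.
  by rewrite setI_eq0 disjoint_sym disjoints1 inE.
by rewrite setU0 (setIidPr S_sub).
Qed.

Lemma greedy_run_coalition (R : realFieldType) (T : finType) (v : {set T} -> R)
    (s : seq T) (C : {set {set T}}) :
  greedy_run v s C ->
  forall S, S \in C -> S != set0 /\ S \subset [set x in s].
Proof.
elim=> [|{}s {}C p _ IH _|{}s {}C p S0 _ IH S0_in_C _ _] S.
- by rewrite in_set0.
- rewrite set_in_rcons in_setU1 => /predU1P[->|/IH[S_neq0 S_sub]].
    by rewrite set1_neq0 sub1set setU11.
  by rewrite S_neq0 (subset_trans S_sub (subsetU1 _ _)).
- rewrite set_in_rcons in_setU1 => /predU1P[->|].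
    have [_ S0_sub] := IH S0 S0_in_C.
    split; first by apply/set0Pn; exists p; rewrite !inE eqxx orbT.
    by rewrite setUC setUS.
  rewrite in_setD1 => /andP[_ /IH[S_neq0 S_sub]].
  by rewrite S_neq0 (subset_trans S_sub (subsetU1 _ _)).
Qed.

Section GreedyValue.

Variables (R : realFieldType) (T : finType) (mn : R) (v : {set T} -> R).
Hypothesis v_set0 : v set0 = 0.
Hypothesis v1_ge : forall p, mn <= v [set p].

Lemma greedy_run_value_ge (s : seq T) (C : {set {set T}}) :
  greedy_run v s C -> uniq s ->
  forall S, S \in C -> #|S|%:R * mn <= v S.
Proof.
elim=> [|{}s {}C p _ IH _|{}s {}C p S0 run IH S0_in_C join_ge _] + S.
- by rewrite in_set0.
- rewrite rcons_uniq => /andP[_ /IH {}IH].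
  rewrite in_setU1 => /predU1P[->|/IH //].
  by rewrite cards1 mul1r.
- rewrite rcons_uniq => /andP[p_notin_s /IH {}IH].
  rewrite in_setU1 => /predU1P[->|]; last by rewrite in_setD1 => /andP[_ /IH].
  have [_ S0_sub] := greedy_run_coalition run S0_in_C.
  have p_notin_S0 : p \notin S0.
    by apply: contra p_notin_s => /(subsetP S0_sub); rewrite inE.
  have := amc_rcons v p_notin_s (sub0set [set x in s]).
  rewrite set0U v_set0 subr0 => amc_alone.
  move: join_ge; rewrite amc_alone amc_rcons //.
  rewrite lerBrDl setUC cardsU1 p_notin_S0 add1n -addn1 natrD mulrDl mul1r.
  by apply: le_trans; rewrite lerD ?IH.
Qed.

End GreedyValue.

Theorem lemma2 (R : realFieldType) (T : finType) (mn mx : R) (delta : nat)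
    (v : {set T} -> R) (pi : seq T) (Cg : {set {set T}}) :
  (1 <= delta)%N ->
  in_V mn mx delta v ->
  perm_eq pi (enum T) ->
  greedy_run v pi Cg ->
  forall S : {set T}, S \in Cg -> (#|S| <= delta)%N.
Proof.
move=> _ [v_set0 mn_gt0 _ v_bounds [_ mx_lt]] pi_perm run S S_in_Cg.
have pi_uniq : uniq pi by rewrite (perm_uniq pi_perm) enum_uniq.
have v1_ge p : mn <= v [set p].
  by case: (v_bounds _ _ (set1_neq0 p) (subxx _)).
have vS_ge := greedy_run_value_ge v_set0 v1_ge run pi_uniq S_in_Cg.
have [S_neq0 _] := greedy_run_coalition run S_in_Cg.
have [_ [_ vS_le]] := v_bounds S S S_neq0 (subxx _).
rewrite -ltnS -(ltr_nat R) -(ltr_pM2r mn_gt0).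
exact: le_lt_trans vS_ge (le_lt_trans vS_le mx_lt).
Qed.
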